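(* Let $\beta\ge 1$ and let $R=(S^0,\dots,S^T)$ be a $\beta$-bounded $T$-covering in a congestion game in which every delay function is $f(x)=x$. Then $C(S^T)\le 2\rho(R)$.
   Context: A congestion game has players $N=\{1,\dots,n\}$, a finite resource set $E$ and strategy sets $\Sigma_i\subseteq 2^E$. For a profile $S=(s_1,\dots,s_n)$, $n_e(S)=|\{i: e\in s_i\}|$. Here all delays are $f(x)=x$, so the cost of player $i$ is $c_i(S)=\sum_{e\in s_i}n_e(S)$ and the social cost is $C(S)=\sum_i c_i(S)=\sum_{e\in E}n_e(S)^2$. Fix an optimal profile $S^*=(s_1^*,\dots,s_n^* )$ minimizing $C$ and write $\mathrm{OPT}=C(S^* )$. A best response of player $i$ in $S$ is a strategy $s_i^b\in\Sigma_i$ minimizing $c_i(S_{-i},\cdot)$ over $\Sigma_i$ (where $(S_{-i},s_i')$ replaces $s_i$ by $s_i'$); if no strategy strictly decreases $i$'s cost, the best response is $s_i$ itself. A $T$-covering is a sequence of profiles $R=(S^0,\dots,S^T)$ together with players $\pi(1),\dots,\pi(T)$ such that for each $1\le t\le T$, $S^t=(S^{t-1}_{-\pi(t)},s')$ where $s'$ is a best response of $\pi(t)$ in $S^{t-1}$, and every player of $N$ occurs at least once among $\pi(1),\dots,\pi(T)$. It is $\beta$-bounded if every player occurs at most $\beta$ times among $\pi(1),\dots,\pi(T)$. For each player $i$, $\mathrm{last}(i)=\max\{t:\pi(t)=i\}$. Define $\rho(R)=\sum_{i=1}^n\sum_{e\in s_i^*}\bigl(n_e(S^{\mathrm{last}(i)-1})+1\bigr)$.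 *)

From mathcomp Require Import all_boot.
Set Implicit Arguments. Unset Strict Implicit. Unset Printing Implicit Defensive.

Section Congestion.
Variables (n : nat) (E : finType).

Definition profile := 'I_n -> {set E}.

Definition load (S : profile) (e : E) : nat := #|[set i | e \in S i]|.

Definition pcost (S : profile) (i : 'I_n) : nat := \sum_(e in S i) load S e.

Definition scost (S : profile) : nat := \sum_(i < n) pcost S i.

Definition upd (S : profile) (i : 'I_n) (s' : {set E}) : profile :=
  fun j => if j == i then s' else S j.

Definition valid (Sigma : 'I_n -> {set {set E}}) (S : profile) : Prop :=
  forall i, S i \in Sigma i.

Definition optimal (Sigma : 'I_n -> {set {set E}}) (Sstar : profile) : Prop :=
  valid Sigma Sstar /\ forall S, valid Sigma S -> scost Sstar <= scost S.

Definition best_response (Sigma : 'I_n -> {set {set E}}) (S : profile)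
    (i : 'I_n) (s' : {set E}) : Prop :=
  [/\ s' \in Sigma i,
      (forall s'', s'' \in Sigma i -> pcost (upd S i s') i <= pcost (upd S i s'') i)
    & ((forall s'', s'' \in Sigma i -> pcost S i <= pcost (upd S i s'') i) -> s' = S i)].

(* R = (S^0,...,S^T) with players pi(1),...,pi(T) is a T-covering.
   Only S 0 .. S T and pi 1 .. pi T are relevant. *)
Definition covering (Sigma : 'I_n -> {set {set E}}) (T : nat)
    (S : nat -> profile) (pi : nat -> 'I_n) : Prop :=
  [/\ valid Sigma (S 0),
      (forall t, 1 <= t <= T ->
         exists2 s', best_response Sigma (S t.-1) (pi t) s' &
                     S t = upd (S t.-1) (pi t) s')
    & (forall i : 'I_n, exists2 t, 1 <= t <= T & pi t = i)].

Definition occ (T : nat) (pi : nat -> 'I_n) (i : 'I_n) : nat :=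
  #|[set t : 'I_T.+1 | (1 <= (t : nat)) && (pi t == i)]|.

Definition bounded (beta T : nat) (pi : nat -> 'I_n) : Prop :=
  forall i, occ T pi i <= beta.

Definition last_move (T : nat) (pi : nat -> 'I_n) (i : 'I_n) : nat :=
  \max_(1 <= t < T.+1 | pi t == i) t.

Definition rho (Sstar : profile) (T : nat) (S : nat -> profile)
    (pi : nat -> 'I_n) : nat :=
  \sum_(i < n) \sum_(e in Sstar i) (load (S (last_move T pi i).-1) e + 1).

End Congestion.

From mathcomp Require Import all_boot.
From mathcomp Require Import zify.
Set Implicit Arguments. Unset Strict Implicit. Unset Printing Implicit Defensive.

(* After last(i) player i never
   moves again, so in the final profile S^T every player j with
   last(j) <= last(i) uses the strategy it has in S^{last(i)}.

   1. Load/overlap identities (section Loads): with linear delays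
      C(S) = sum_i sum_j |s_i /\ s_j|, and a unilateral deviation raises every
      load by at most one.
   2. An ordering trick (sum_sym_le): a symmetric double sum is at most twice
      its part over the pairs (i, j) with key(j) <= key(i).
   3. Facts about the covering (section Covering): last(i) is a genuine move of
      player i, players are frozen after their last move, and the cost of i
      just after its last move is at most sum_{e in s_i^*} (n_e(S^{last(i)-1}) + 1)
      because that move is a best response.
   The theorem combines 2 (with key = last) with 1 and 3: the part of C(S^T)
   over pairs with last(j) <= last(i) is, for fixed i, bounded by the cost of
   player i in S^{last(i)}, hence by the i-th summand of rho(R). *)

Section Loads.
Variables (n : nat) (E : finType).
Implicit Types (S : profile n E) (i j : 'I_n) (s : {set E}) (e : E).

Lemma loadE S e : load S e = \sum_(j < n) (e \in S j).
Proof. by rewrite /load -sum1_card big_mkcond /=; apply: eq_bigr => j _; rewrite inE. Qed.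

Lemma load_upd S i s e : load (upd S i s) e <= load S e + 1.
Proof.
rewrite !loadE (bigD1 i) //= [X in _ <= X + _](bigD1 i) //= /upd eqxx.
under eq_bigr => j /negbTE -> do [].
by case: (e \in s); case: (e \in S i); rewrite /=; lia.
Qed.

Lemma pcost_upd_le S i s : pcost (upd S i s) i <= \sum_(e in s) (load S e + 1).
Proof. by rewrite /pcost /upd eqxx; apply: leq_sum => e _; exact: load_upd. Qed.

Lemma pcost_overlap S i : pcost S i = \sum_(j < n) #|S i :&: S j|.
Proof.
rewrite /pcost (eq_bigr _ (fun e _ => loadE S e)) exchange_big /=.
apply: eq_bigr => j _; rewrite -sum1_card (eq_bigl _ _ (fun e => in_setI e _ _)).
by rewrite big_mkcondr; apply: eq_bigr => e _; case: (e \in S j).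
Qed.

Lemma overlap_agree_le S S' i (P : pred 'I_n) :
  P i -> (forall j, P j -> S j = S' j) ->
  \sum_(j < n | P j) #|S i :&: S j| <= pcost S' i.
Proof.
move=> Pi agree; rewrite pcost_overlap (agree i Pi).
rewrite (eq_bigr (fun j => #|S' i :&: S' j|)); last by move=> j /agree ->.
by rewrite [X in _ <= X](bigID P) leq_addr.
Qed.

End Loads.

(* A symmetric double sum over a finite type is at most twice its part over
   the pairs (i, j) with key j <= key i: every other pair (i, j) is mirrored
   by (j, i), which satisfies key i < key j. *)
Lemma sum_sym_le (I : finType) (f : I -> I -> nat) (key : I -> nat) :
  (forall i j, f i j = f j i) ->
  \sum_i \sum_j f i j <= 2 * \sum_i \sum_(j | key j <= key i) f i j.
Proof.
move=> fC; set low := (X in _ <= 2 * X).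
have -> : \sum_i \sum_j f i j = low + \sum_i \sum_(j | ~~ (key j <= key i)) f i j.
  by rewrite -big_split; apply: eq_bigr => i _; rewrite (bigID (fun j => key j <= key i)).
suff high_le : \sum_i \sum_(j | ~~ (key j <= key i)) f i j <= low by lia.
under eq_bigr => i _ do rewrite big_mkcond.
rewrite exchange_big /=; apply: leq_sum => j _.
rewrite [X in _ <= X]big_mkcond; apply: leq_sum => i _ /=.
by case: ifP => //; rewrite -ltnNge => /ltnW ->; rewrite fC.
Qed.

Lemma bigmax_nat_attained (r : seq nat) (P : pred nat) :
  0 < \max_(t <- r | P t) t ->
  P (\max_(t <- r | P t) t) && (\max_(t <- r | P t) t \in r).
Proof.
rewrite big_seq_cond; elim/big_ind: _ => [|x y|t /andP[rt Pt] _] //; last exact/andP.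
by move=> Hx Hy; rewrite /maxn; case: ifP.
Qed.

Section Covering.
Variables (n : nat) (E : finType) (Sigma : 'I_n -> {set {set E}}).
Variables (T : nat) (S : nat -> profile n E) (pi : nat -> 'I_n).
Hypothesis cover : covering Sigma T S pi.

Local Notation L := (last_move T pi).

Lemma last_move_ge i t : 1 <= t <= T -> pi t = i -> t <= L i.
Proof.
move=> tT pit; apply: (leq_bigmax_seq t); last by rewrite pit.
by rewrite mem_index_iota; lia.
Qed.

(* last(i) is a move of player i in 1..T (every player moves at least once). *)
Lemma last_move_spec i : [/\ 1 <= L i, L i <= T & pi (L i) = i].
Proof.
have [_ _ covers] := cover; have [t tT pit] := covers i.
have L1 : 1 <= L i by have := last_move_ge tT pit; lia.
have /andP[/eqP piL] := bigmax_nat_attained L1.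
by rewrite mem_index_iota => /andP[_ LT]; split.
Qed.

Lemma frozen_after_last j t : L j <= t <= T -> S t j = S (L j) j.
Proof.
have [_ steps _] := cover; case/andP => /subnKC <-.
elim: (t - L j) => [|k IH] kT; first by rewrite addn0.
have [s' _ ->] := steps (L j + k.+1) ltac:(lia).
rewrite /upd ifF ?addnS ?IH //; first by lia.
apply/negbTE/eqP => /esym/last_move_ge; lia.
Qed.

Lemma final_agrees i j : L j <= L i -> S T j = S (L i) j.
Proof.
move=> LjLi; have [_ LiT _] := last_move_spec i; have [_ LjT _] := last_move_spec j.
by rewrite (frozen_after_last (t := T)) ?(frozen_after_last (t := L i)) //; lia.
Qed.

(* The last move of i is a best response, so deviating to s_i^* instead would
   not have been cheaper. *)
Lemma cost_at_last_move (Sstar : profile n E) i :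
  valid Sigma Sstar ->
  pcost (S (L i)) i <= \sum_(e in Sstar i) (load (S (L i).-1) e + 1).
Proof.
move=> vstar; have [_ steps _] := cover; have [L1 LT piL] := last_move_spec i.
have [s' [_ best _] ->] := steps (L i) ltac:(lia); rewrite piL in best *.
exact: leq_trans (best _ (vstar i)) (pcost_upd_le _ _ _).
Qed.

End Covering.

Theorem lemma1 (n : nat) (E : finType) (Sigma : 'I_n -> {set {set E}})
    (Sstar : profile n E) (beta T : nat) (S : nat -> profile n E)
    (pi : nat -> 'I_n) :
  optimal Sigma Sstar ->
  1 <= beta ->
  covering Sigma T S pi ->
  bounded beta T pi ->
  scost (S T) <= 2 * rho Sstar T S pi.
Proof.
move=> [vstar _] _ cover _.
have overlapC i j : #|S T i :&: S T j| = #|S T j :&: S T i| by rewrite setIC.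
rewrite [scost _](eq_bigr _ (fun i _ => pcost_overlap (S T) i)).
apply: leq_trans (sum_sym_le (last_move T pi) overlapC) _.
rewrite leq_mul2l /rho; apply/orP; right; apply: leq_sum => i _.
apply: leq_trans (cost_at_last_move cover i vstar).
exact: overlap_agree_le (leqnn _) (fun j => final_agrees cover (i := i) (j := j)).
Qed.
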